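(* For every $n\ge1$ and every $A\subseteq[n]$, the set-alternating domain $D_X(A)$ is a copious peak-pit domain and is a maximal Condorcet domain on $[n]$.
   Context: Alternatives are $X=[n]$, with societal axis $1<\dots<n$; linear orders are written as strings, leftmost ranked highest. For $A\subseteq[n]$, $D_X(A)$ is the set of all linear orders $q$ on $[n]$ such that for every triple $i<j<k$: if $j\in A$ then $i$ is not ranked last among $\{i,j,k\}$ in $q$ ($1N3$), and if $j\notin A$ then $k$ is not ranked first among $\{i,j,k\}$ in $q$ ($3N1$). A domain is a set of linear orders on $[n]$. A Condorcet domain is a domain $D$ such that for every profile with an odd number of voters whose preferences all lie in $D$, the pairwise majority relation is transitive. It is maximal if no Condorcet domain on $[n]$ strictly contains it. A domain is copious if its restriction to every triple of alternatives contains exactly 4 distinct orders. For a triple $a<b<c$, call them the 1st, 2nd, 3rd alternative; the never condition $xNp$ ($x,p\in\{1,2,3\}$) says the $x$-th alternative of the triple is never in position $p$ within the triple. A domain is peak-pit if for every triple its restriction satisfies some never condition of the form $xN3$ or $xN1$. *)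

From mathcomp Require Import all_boot all_fingroup.
Set Implicit Arguments. Unset Strict Implicit. Unset Printing Implicit Defensive.

(* Alternatives X = [n] are represented by 'I_n (0-based; the societal axis
   is the natural order of 'I_n).  A linear order q on X is a permutation
   q : {perm 'I_n} giving the RANK of each alternative: q x = 0 means x is
   ranked highest; x is preferred to y in q iff q x < q y. *)
Definition lorder n := {perm 'I_n}.
Definition domain n := {set lorder n}.

(* position (0 = top, 2 = bottom) of t within the triple {a,b,c} in q *)
Definition pos3 n (q : lorder n) (a b c t : 'I_n) : nat :=
  #|[set y in [:: a; b; c] | q y < q t]|.

Definition DX n (A : {set 'I_n}) : domain n :=
  [set q : lorder n | [forall i : 'I_n, forall j : 'I_n, forall k : 'I_n,
     (i < j) && (j < k) ==>
       (if j \in A then pos3 q i j k i != 2 else pos3 q i j k k != 0)]].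

Definition majority n (P : seq (lorder n)) (a b : 'I_n) : bool :=
  count (fun q : lorder n => q b < q a) P < count (fun q : lorder n => q a < q b) P.

Definition condorcet n (D : domain n) : Prop :=
  forall P : seq (lorder n), odd (size P) -> all (fun q => q \in D) P ->
    forall a b c : 'I_n, majority P a b -> majority P b c -> majority P a c.

Definition maximal_condorcet n (D : domain n) : Prop :=
  condorcet D /\
  forall D' : domain n, condorcet D' -> D \subset D' -> D' = D.

Definition restr3 n (q : lorder n) (a b c : 'I_n) : {set 'I_n * 'I_n} :=
  [set xy | [&& xy.1 \in [:: a; b; c], xy.2 \in [:: a; b; c] & q xy.1 < q xy.2]].

Definition copious n (D : domain n) : Prop :=
  forall a b c : 'I_n, a < b -> b < c ->
    #|[set restr3 q a b c | q in D]| = 4.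

Definition nth3 n (a b c : 'I_n) (x : nat) : 'I_n :=
  if x == 1 then a else if x == 2 then b else c.

Definition never n (D : domain n) (a b c : 'I_n) (x p : nat) : Prop :=
  forall q, q \in D -> (pos3 q a b c (nth3 a b c x)).+1 != p.

Definition peak_pit n (D : domain n) : Prop :=
  forall a b c : 'I_n, a < b -> b < c ->
    exists x p, x \in [:: 1; 2; 3] /\ p \in [:: 1; 3] /\ never D a b c x p.

From mathcomp Require Import all_boot all_fingroup.
From mathcomp Require Import zify.
Set Implicit Arguments. Unset Strict Implicit. Unset Printing Implicit Defensive.

(* A linear order lies in D_X(A) iff on every triple i < j < k its restriction
   is one of the four orders allowed by 1N3 (j in A) or 3N1 (j not in A).  All
   four occur in D_X(A): take the order that keeps the axis outside an interval
   [a, c] and rearranges [a, c] as (its interior points outside A, c, a, its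
   interior points in A), for [a, c] = [k, k] (the identity), [j, k], [i, j]
   and [i, k]; this gives copiousness.  Peak-pit is the defining never condition,
   and Sen's argument gives the Condorcet property: a majority cycle a > b > c > a
   forces voters ranking abc, bca and cab, which between them put every
   alternative in every position.  Maximality: an order violating the never
   condition on a triple forms, with two suitable orders of D_X(A), a
   three-voter profile with a cyclic majority. *)

Section LinearOrders.
Variable n : nat.
Implicit Types (q : lorder n) (a b c t x y z : 'I_n).

Definition prefers q : rel 'I_n := fun x y => q x < q y.

Lemma prefers_asym q x y : x != y -> prefers q y x = ~~ prefers q x y.
Proof.
move=> neq_xy; rewrite /prefers ltnNge leq_eqVlt negb_or.
suff -> : (q x == q y :> nat) = false by [].
by apply/negbTE; apply: contra neq_xy => /eqP/val_inj/perm_inj ->.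
Qed.

Lemma prefers_trans q : transitive (prefers q).
Proof. by move=> y x z; apply: ltn_trans. Qed.

Lemma exists_perm_key (key : 'I_n -> nat) : injective key ->
  exists q, forall x y, prefers q x y = (key x < key y).
Proof.
move=> key_inj; pose rank x := #|[set y | key y < key x]|.
have rank_mono x y : key x < key y -> rank x < rank y.
  move=> lt_xy; apply: proper_card; apply/properP; split.
    by apply/subsetP => z; rewrite !inE => /ltn_trans; apply.
  by exists x; rewrite !inE ?ltnn.
have rankE x y : (rank x < rank y) = (key x < key y).
  apply/idP/idP => [lt_r|]; last exact: rank_mono.
  rewrite ltnNge leq_eqVlt negb_or; apply/andP; split.
    by apply: contraTN lt_r => /eqP/key_inj ->; rewrite ltnn.
  by apply: contraTN lt_r => /rank_mono/ltnW; rewrite leqNgt.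
have rank_lt x : rank x < n.
  rewrite -[n]card_ord -cardsT; apply: proper_card; rewrite properT.
  by apply/eqP => full; have := in_setT x; rewrite -full inE ltnn.
have rank_inj : injective (fun x => Ordinal (rank_lt x)).
  move=> x y /(congr1 val) /= eq_r; apply: key_inj.
  by case: (ltngtP (key x) (key y)) => // /rank_mono; rewrite eq_r ltnn.
by exists (perm rank_inj) => x y; rewrite /prefers !permE /= rankE.
Qed.

Lemma exists_perm_lex (f : 'I_n -> nat) :
  exists q, forall x y, x < y -> prefers q x y = (f x <= f y).
Proof.
have key_inj : injective (fun x : 'I_n => f x * n + x).
  move=> x y /= /(congr1 (modn^~ n)); rewrite !modnMDl !modn_small //.
  exact: val_inj.
have [q qE] := exists_perm_key key_inj.
exists q => x y lt_xy; rewrite qE; have := ltn_ord x; have := ltn_ord y.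
case: (leqP (f x) (f y)) => [le_f | lt_f].
  have : f x * n <= f y * n by rewrite leq_mul2r le_f orbT.
  lia.
have : (f y).+1 * n <= f x * n by rewrite leq_mul2r lt_f orbT.
rewrite mulSn; lia.
Qed.

Lemma prefers_irr q x : prefers q x x = false.
Proof. exact: ltnn. Qed.

Lemma prefers_neq q x y : prefers q x y -> x != y.
Proof. by apply: contraTneq => ->; rewrite prefers_irr. Qed.

Lemma pos3E q a b c t : uniq [:: a; b; c] ->
  pos3 q a b c t = prefers q a t + prefers q b t + prefers q c t.
Proof.
move=> abc_uniq; rewrite /pos3 (eq_card (B := mem [seq y <- [:: a; b; c] | prefers q y t])).
  by rewrite (card_uniqP _) ?filter_uniq // size_filter /= addn0 addnA.
by move=> y; rewrite in_set mem_filter andbC.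
Qed.

Lemma eq_pos3 q a b c a' b' c' t : [:: a; b; c] =i [:: a'; b'; c'] ->
  pos3 q a b c t = pos3 q a' b' c' t.
Proof. by move=> eq_abc; apply: eq_card => y; rewrite !in_set eq_abc. Qed.

Lemma pos3_ranked q x y z : prefers q x y -> prefers q y z ->
  [/\ pos3 q x y z x = 0, pos3 q x y z y = 1 & pos3 q x y z z = 2].
Proof.
move=> xy yz; have xz := prefers_trans xy yz.
have xyz_uniq : uniq [:: x; y; z].
  by rewrite /= !inE !negb_or (prefers_neq xy) (prefers_neq yz) (prefers_neq xz).
have asym u v : prefers q u v -> prefers q v u = false.
  by move=> uv; rewrite prefers_asym ?uv ?(prefers_neq uv).
by rewrite !pos3E // !prefers_irr xy yz xz (asym _ _ xy) (asym _ _ yz) (asym _ _ xz).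
Qed.

End LinearOrders.

Section Condorcet.
Variable n : nat.
Implicit Types (D : domain n) (P : seq (lorder n)) (a b c x y z : 'I_n).

Lemma majority_irr P x : majority P x x = false.
Proof. by rewrite /majority ltnn. Qed.

Lemma count_prefers P x y : x != y ->
  count (fun q => prefers q y x) P + count (fun q => prefers q x y) P = size P.
Proof.
move=> neq_xy; rewrite -(count_predC (fun q => prefers q x y)) addnC.
by congr (_ + _); apply: eq_count => q /=; rewrite prefers_asym.
Qed.

Lemma majority_asym P x y : odd (size P) -> x != y ->
  majority P y x = ~~ majority P x y.
Proof.
move=> oddP neq_xy; have := count_prefers P neq_xy; rewrite /majority /prefers.
case: ltngtP => // eq_count sizeP.
by move: oddP; rewrite -sizeP eq_count addnn odd_double.
Qed.

Lemma majority_gt_half P x y : majority P x y ->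
  size P < 2 * count (fun q => prefers q x y) P.
Proof.
move=> Mxy; have neq_xy : x != y by apply: contraTneq Mxy => ->; rewrite majority_irr.
by move: Mxy; have := count_prefers P neq_xy; rewrite /majority /prefers; lia.
Qed.

Lemma majority_common_voter P x y z : majority P x y -> majority P y z ->
  exists2 v, v \in P & prefers v x y && prefers v y z.
Proof.
move=> /majority_gt_half Mxy /majority_gt_half Myz.
have : has (predI (fun q => prefers q x y) (fun q => prefers q y z)) P.
  rewrite has_count; have := count_predUI (fun q => prefers q x y) (fun q => prefers q y z) P.
  by have := count_size (predU (fun q => prefers q x y) (fun q => prefers q y z)) P; lia.
by case/hasP => v vP xyz; exists v.
Qed.

Lemma exists_sorted3 a b c : uniq [:: a; b; c] ->
  exists t1 t2 t3 : 'I_n, [/\ t1 < t2, t2 < t3 & [:: t1; t2; t3] =i [:: a; b; c]].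
Proof.
pose le (u v : 'I_n) := u <= v.
have le_total : total le by move=> u v; apply: leq_total.
have := perm_sort le [:: a; b; c]; have := sort_sorted le_total [:: a; b; c].
have := size_sort le [:: a; b; c].
move=> + + + abc_uniq.
case: (sort le _) => [|t1 [|t2 [|t3 []]]] //= _ /and3P [le12 le23 _] /permPl perm_t.
move: abc_uniq; rewrite -(perm_uniq perm_t) /= !inE !negb_or.
case/and3P => /andP [ne12 _] ne23 _.
by exists t1, t2, t3; split; rewrite ?ltn_neqAle; [apply/andP|apply/andP|apply: perm_mem].
Qed.

Lemma never_condorcet D :
  (forall a b c, a < b -> b < c -> exists x p : nat,
     x \in [:: 1; 2; 3] /\ p \in [:: 1; 2; 3] /\ never D a b c x p) ->
  condorcet D.
Proof.
move=> restricted P oddP PD a b c Mab Mbc; apply/negPn/negP => nMac.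
have ab : a != b by apply: contraTneq Mab => ->; rewrite majority_irr.
have bc : b != c by apply: contraTneq Mbc => ->; rewrite majority_irr.
have ac : a != c by apply: contraTneq Mbc => <-; rewrite /majority -leqNgt ltnW.
have Mca : majority P c a by rewrite majority_asym.
have [v1 v1P /andP [v1ab v1bc]] := majority_common_voter Mab Mbc.
have [v2 v2P /andP [v2bc v2ca]] := majority_common_voter Mbc Mca.
have [v3 v3P /andP [v3ca v3ab]] := majority_common_voter Mca Mab.
have abc_uniq : uniq [:: a; b; c] by rewrite /= !inE !negb_or ab bc ac.
have [t1 [t2 [t3 [lt12 lt23 t_abc]]]] := exists_sorted3 abc_uniq.
have [x [p [_ [p_in never_xp]]]] := restricted _ _ _ lt12 lt23.
set t := nth3 t1 t2 t3 x in never_xp.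
have t_in : t \in [:: a; b; c].
  by rewrite -t_abc /t /nth3; case: (x == 1); case: (x == 2); rewrite !inE eqxx ?orbT.
have avoid v a' b' c' : v \in P -> [:: a'; b'; c'] =i [:: a; b; c] ->
    (pos3 v a' b' c' t).+1 != p.
  move=> vP abc'; rewrite (eq_pos3 _ _ abc') -(eq_pos3 _ _ t_abc).
  by apply: never_xp; apply: (allP PD).
have [v1a v1b v1c] := pos3_ranked v1ab v1bc.
have [v2b v2c v2a] := pos3_ranked v2bc v2ca.
have [v3c v3a v3b] := pos3_ranked v3ca v3ab.
have := avoid v1 a b c v1P (frefl _).
have := avoid v2 b c a v2P (mem_rot 1 [:: a; b; c]).
have := avoid v3 c a b v3P (mem_rot 2 [:: a; b; c]).
by move: t_in; rewrite !inE => /or3P [] /eqP ->; rewrite ?v1a ?v1b ?v1c ?v2a ?v2b ?v2c ?v3a ?v3b ?v3c;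
  move: p_in; rewrite !inE => /or3P [] /eqP ->.
Qed.

End Condorcet.

Definition transitive3 (p : bool * bool * bool) : bool :=
  let: (ij, ik, jk) := p in ((ij && jk) ==> ik) && ((~~ ij && ~~ jk) ==> ~~ ik).

(* [ij || ik] says that i is not last (1N3), [ik || jk] that k is not first (3N1). *)
Definition allowed (b : bool) (p : bool * bool * bool) : bool :=
  let: (ij, ik, jk) := p in transitive3 p && (if b then ij || ik else ik || jk).

Definition maj3 (b1 b2 b3 : bool) : bool := [|| b1 && b2, b2 && b3 | b3 && b1].

Definition pattern_maj3 (p1 p2 p3 : bool * bool * bool) : bool * bool * bool :=
  (maj3 p1.1.1 p2.1.1 p3.1.1, maj3 p1.1.2 p2.1.2 p3.1.2, maj3 p1.2 p2.2 p3.2).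

Lemma card_allowed b : #|[pred p | allowed b p]| = 4.
Proof.
rewrite (@eq_card _ _ (mem [:: (true, true, true); (true, true, false); (false, true, true);
                              if b then (true, false, false) else (false, false, true)])).
  by rewrite (card_uniqP _) //; case: b.
by case: b => -[[[] []] []].
Qed.

Lemma allowed_cycle b p : transitive3 p -> ~~ allowed b p ->
  exists p1 p2, [&& allowed b p1, allowed b p2 & ~~ transitive3 (pattern_maj3 p p1 p2)].
Proof.
case: b; case: p => [[[] []] []] //= _ _.
- by exists (true, true, true), (true, false, false).
- by exists (false, true, true), (true, true, false).
- by exists (true, true, true), (false, false, true).
- by exists (false, true, true), (true, true, false).
Qed.

Section Patterns.
Variable n : nat.
Implicit Types (r : rel 'I_n) (i j k x y : 'I_n).

Definition pattern r i j k : bool * bool * bool := (r i j, r i k, r j k).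

Lemma uniq3_lt i j k : i < j -> j < k -> uniq [:: i; j; k].
Proof.
move=> ij jk; rewrite /= !inE !negb_or andbT -!val_eqE /=.
by rewrite !neq_ltn ij jk (ltn_trans ij jk).
Qed.

Lemma uniq3P i j k : uniq [:: i; j; k] -> [/\ i != j, i != k & j != k].
Proof. by rewrite /= !inE !negb_or andbT => /andP [/andP [-> ->] ->]. Qed.

Lemma pattern_transitive3 r i j k : transitive r ->
  (forall x y, x != y -> r y x = ~~ r x y) -> uniq [:: i; j; k] ->
  transitive3 (pattern r i j k).
Proof.
move=> r_trans r_asym /uniq3P [ij ik jk].
apply/andP; split; apply/implyP => /andP [rij rjk]; first exact: r_trans rjk.
rewrite -(r_asym _ _ ij) in rij; rewrite -(r_asym _ _ jk) in rjk.
by rewrite -(r_asym _ _ ik); apply: r_trans rij.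
Qed.

Lemma majority3 (q1 q2 q3 : lorder n) x y : x != y ->
  majority [:: q1; q2; q3] x y = maj3 (prefers q1 x y) (prefers q2 x y) (prefers q3 x y).
Proof.
move=> neq_xy; move: (prefers_asym q1 neq_xy) (prefers_asym q2 neq_xy) (prefers_asym q3 neq_xy).
rewrite /majority /maj3 /prefers /= => -> -> ->.
by case: (q1 x < q1 y); case: (q2 x < q2 y); case: (q3 x < q3 y).
Qed.

Lemma condorcet_maj3 (D : domain n) (q1 q2 q3 : lorder n) i j k :
  condorcet D -> q1 \in D -> q2 \in D -> q3 \in D -> uniq [:: i; j; k] ->
  transitive3 (pattern_maj3 (pattern (prefers q1) i j k) (pattern (prefers q2) i j k)
                            (pattern (prefers q3) i j k)).
Proof.
move=> condD q1D q2D q3D ijk_uniq.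
suff: transitive3 (pattern (majority [:: q1; q2; q3]) i j k).
  by have [ij ik jk] := uniq3P ijk_uniq; rewrite /pattern !majority3.
apply: pattern_transitive3 ijk_uniq; last by move=> x y; apply: majority_asym.
by move=> y x z; apply: condD => //=; rewrite q1D q2D q3D.
Qed.

End Patterns.

Section Restrictions.
Variable n : nat.
Implicit Types (q : lorder n) (i j k : 'I_n).

Definition pattern_of_restr i j k (R : {set 'I_n * 'I_n}) : bool * bool * bool :=
  ((i, j) \in R, (i, k) \in R, (j, k) \in R).

Lemma pattern_of_restr3 q i j k :
  pattern_of_restr i j k (restr3 q i j k) = pattern (prefers q) i j k.
Proof. by rewrite /pattern_of_restr !inE !eqxx ?orbT. Qed.

Lemma restr3_pattern q q' i j k : uniq [:: i; j; k] ->
  pattern (prefers q) i j k = pattern (prefers q') i j k -> restr3 q i j k = restr3 q' i j k.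
Proof.
move=> /uniq3P [ij ik jk] [qij qik qjk]; apply/setP => -[x y]; rewrite !inE /=.
case/boolP: [|| x == i, x == j | x == k] => //= /or3P [] /eqP ->;
case/boolP: [|| y == i, y == j | y == k] => //= /or3P [] /eqP ->;
  rewrite -/(prefers q _ _) -/(prefers q' _ _) ?prefers_irr
    ?(prefers_asym q ij) ?(prefers_asym q' ij) ?(prefers_asym q ik)
    ?(prefers_asym q' ik) ?(prefers_asym q jk) ?(prefers_asym q' jk) ?qij ?qik ?qjk //.
Qed.

Lemma card_restr3 (D : domain n) i j k : uniq [:: i; j; k] ->
  #|[set restr3 q i j k | q in D]| = #|[set pattern (prefers q) i j k | q in D]|.
Proof.
move=> ijk_uniq.
have -> : [set pattern (prefers q) i j k | q in D] =
          pattern_of_restr i j k @: [set restr3 q i j k | q in D].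
  by rewrite -imset_comp; apply: eq_imset => q; rewrite /= pattern_of_restr3.
rewrite [RHS]card_in_imset // => _ _ /imsetP [q _ ->] /imsetP [q' _ ->].
by rewrite !pattern_of_restr3; apply: restr3_pattern.
Qed.

End Restrictions.

Section SetAlternating.
Variables (n : nat) (A : {set 'I_n}).
Implicit Types (q : lorder n) (a b c i j k x y z : 'I_n).

Lemma DX_pos3 q i j k : q \in DX A -> i < j -> j < k ->
  if j \in A then pos3 q i j k i != 2 else pos3 q i j k k != 0.
Proof.
by rewrite inE => /forallP/(_ i)/forallP/(_ j)/forallP/(_ k)/implyP + ij jk; apply; rewrite ij.
Qed.

Lemma pos3_allowed q i j k : i < j -> j < k ->
  (if j \in A then pos3 q i j k i != 2 else pos3 q i j k k != 0) =
  allowed (j \in A) (pattern (prefers q) i j k).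
Proof.
move=> ij jk; have ijk_uniq := uniq3_lt ij jk; have [neq_ij neq_ik _] := uniq3P ijk_uniq.
have := pattern_transitive3 (@prefers_trans _ q) (@prefers_asym _ q) ijk_uniq.
rewrite /allowed /pattern => ->; rewrite !pos3E // !prefers_irr.
rewrite (prefers_asym q neq_ij) (prefers_asym q neq_ik).
by case: (j \in A); case: (prefers q i j); case: (prefers q i k); case: (prefers q j k).
Qed.

Lemma DX_allowed q : q \in DX A <->
  (forall i j k, i < j -> j < k -> allowed (j \in A) (pattern (prefers q) i j k)).
Proof.
split=> [qD i j k ij jk | q_allowed]; first by rewrite -pos3_allowed ?DX_pos3.
rewrite inE; apply/forallP => i; apply/forallP => j; apply/forallP => k.
by apply/implyP => /andP [ij jk]; rewrite pos3_allowed ?q_allowed.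
Qed.

Lemma DX_peak_pit : peak_pit (DX A).
Proof.
move=> i j k ij jk; case jA: (j \in A).
  by exists 1, 3; do 2 split=> //; move=> q /DX_pos3 /(_ ij jk); rewrite jA.
by exists 3, 1; do 2 split=> //; move=> q /DX_pos3 /(_ ij jk); rewrite jA.
Qed.

Definition alternating_key (f : 'I_n -> nat) : Prop :=
  forall a b c, a < b -> b < c ->
    if b \in A then (f a <= f b) || (f a <= f c) else (f a <= f c) || (f b <= f c).

Lemma lex_DX (f : 'I_n -> nat) q : alternating_key f ->
  (forall x y, x < y -> prefers q x y = (f x <= f y)) -> q \in DX A.
Proof.
move=> f_ok qf; apply/DX_allowed => a b c ab bc.
rewrite /pattern !qf ?(ltn_trans ab bc) //=.
have := f_ok a b c ab bc; case: (b \in A) => -> /=; rewrite andbT;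
  by apply/andP; split; apply/implyP; lia.
Qed.

(* Ranking x by (swap_key a c x, x) lexicographically keeps the axis order
   outside [a, c] and orders [a, c] as: interior points outside A, c, a,
   interior points in A. *)
Definition swap_key (a c x : 'I_n) : nat :=
  if x < a then 0 else if c < x then 5 else if x == c :> nat then 2
  else if x == a :> nat then 3 else if x \in A then 4 else 1.

Lemma swap_key_alternating a c : alternating_key (swap_key a c).
Proof.
move=> x y z xy yz; rewrite /swap_key.
by case: (y \in A); repeat case: ifP => ? //=; lia.
Qed.

Lemma swap_key_patterns i j k : i < j -> j < k ->
  let swap_pattern a c := pattern [rel x y | swap_key a c x <= swap_key a c y] i j k in
  [/\ swap_pattern k k = (true, true, true), swap_pattern j k = (true, true, false),
      swap_pattern i j = (false, true, true)
    & swap_pattern i k = if j \in A then (true, false, false) else (false, false, true)].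
Proof.
move=> ij jk /=; have ik := ltn_trans ij jk.
rewrite /pattern /swap_key /= !ltnn !eqxx ij jk ik (leq_gtF (ltnW ij)) (leq_gtF (ltnW jk))
  (leq_gtF (ltnW ik)) (ltn_eqF ij) (ltn_eqF jk) (ltn_eqF ik) (gtn_eqF ij).
by case: (j \in A).
Qed.

Lemma allowed_witness i j k p : i < j -> j < k -> allowed (j \in A) p ->
  exists2 q, q \in DX A & pattern (prefers q) i j k = p.
Proof.
move=> ij jk; have ik := ltn_trans ij jk.
have swap_witness a c : exists2 q, q \in DX A &
    pattern (prefers q) i j k = pattern [rel x y | swap_key a c x <= swap_key a c y] i j k.
  have [q qf] := exists_perm_lex (swap_key a c).
  exists q; last by rewrite /pattern !qf.
  exact: lex_DX (swap_key_alternating a c) qf.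
have [Ekk Ejk Eij] := swap_key_patterns ij jk.
case: (j \in A) => Eik; case: p => [[[] []] []] //= _;
  by first [rewrite -Ekk | rewrite -Ejk | rewrite -Eij | rewrite -Eik]; apply: swap_witness.
Qed.

Lemma DX_copious : copious (DX A).
Proof.
move=> i j k ij jk; rewrite card_restr3 ?uniq3_lt // -(card_allowed (j \in A)).
apply: eq_card => p; rewrite inE; apply/imsetP/idP => [[q qD ->] | /(allowed_witness ij jk)].
  by move/DX_allowed: qD; apply.
by case=> q qD <-; exists q.
Qed.

Lemma DX_maximal (D : domain n) : condorcet D -> DX A \subset D -> D \subset DX A.
Proof.
move=> condD DX_D; apply/subsetP => q qD; apply/DX_allowed => i j k ij jk.
have ijk_uniq := uniq3_lt ij jk.
have q_trans := pattern_transitive3 (@prefers_trans _ q) (@prefers_asym _ q) ijk_uniq.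
apply/negPn/negP => /(allowed_cycle q_trans) [p1 [p2 /and3P [p1_ok p2_ok]]].
have [q1 q1D <-] := allowed_witness ij jk p1_ok.
have [q2 q2D <-] := allowed_witness ij jk p2_ok.
by rewrite (condorcet_maj3 condD qD (subsetP DX_D _ q1D) (subsetP DX_D _ q2D) ijk_uniq).
Qed.

End SetAlternating.

Lemma peak_pit_condorcet n (D : domain n) : peak_pit D -> condorcet D.
Proof.
move=> ppD; apply: never_condorcet => a b c ab bc.
have [x [p [x_in [p_in never_xp]]]] := ppD a b c ab bc.
by exists x, p; do 2 split=> //; move: p_in; rewrite !inE => /orP [] /eqP ->.
Qed.

Theorem proposition1 (n : nat) (A : {set 'I_n}) : 1 <= n ->
  copious (DX A) /\ peak_pit (DX A) /\ maximal_condorcet (DX A).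
Proof.
move=> _; have DX_condorcet := peak_pit_condorcet (DX_peak_pit A).
split; first exact: DX_copious.
split; first exact: DX_peak_pit.
split=> // D condD DX_D; apply/eqP; rewrite eqEsubset DX_D andbT.
exact: DX_maximal.
Qed.
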